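(* Let $(M,d)$ be a complete pointed metric space with at least three distinct points and let $g:\widetilde{M}\to\mathbb{R}$. Then $g$ is bounded and satisfies $d(x,y)g(x,y)\le d(x,u)g(x,u)+d(u,y)g(u,y)$ for all distinct $x,u,y\in M$ if and only if there exists a non-empty bounded set $A\subset\mathrm{Lip}_0(M)$ such that $g(x,y)=\sup_{f\in A}\frac{f(x)-f(y)}{d(x,y)}$ for all $(x,y)\in\widetilde{M}$. Moreover, in this case the continuous extension of $g$ to $\beta\widetilde{M}$ belongs to $G$, and $A$ can be chosen so that the supremum is always attained.
   Context: $\mathrm{Lip}_0(M)$ is the Banach space of Lipschitz $f:M\to\mathbb{R}$ with $f(0)=0$ ($0$ the base point), normed by the Lipschitz constant. $\widetilde{M}=\{(x,y)\in M\times M:x\ne y\}$, $\beta\widetilde{M}$ its Stone–Čech compactification. $G$ is the set of $g\in C(\beta\widetilde{M})$ with $d(x,y)g(x,y)\le d(x,u)g(x,u)+d(u,y)g(u,y)$ for all distinct $x,u,y\in M$. *)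

From HB Require Import structures.
From mathcomp Require Import all_boot all_order all_algebra.
From mathcomp Require Import all_classical all_reals all_analysis.
Set Implicit Arguments. Unset Strict Implicit. Unset Printing Implicit Defensive.
Import Order.TTheory GRing.Theory Num.Theory numFieldTopology.Exports.
Local Open Scope classical_set_scope.
Local Open Scope ring_scope.

Section Defs.
Context {R : realType} {M : metricType R}.

Definition Mtilde := {p : M * M | p.1 <> p.2}.

Definition mt (x y : M) (h : x <> y) : Mtilde := exist _ (x, y) h.

Definition complete_metric :=
  forall u : nat -> M,
    (forall eps : R, 0 < eps -> exists N : nat,
       forall m n, (N <= m)%N -> (N <= n)%N -> mdist (u m) (u n) < eps) ->
    exists l : M, forall eps : R, 0 < eps -> exists N : nat,
       forall n, (N <= n)%N -> mdist (u n) l < eps.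

Definition lipschitz (f : M -> R) :=
  exists L : R, forall x y, `|f x - f y| <= L * mdist x y.

Definition Lip0 (x0 : M) : set (M -> R) :=
  [set f | f x0 = 0 /\ lipschitz f].

Definition lip_norm (f : M -> R) : R :=
  sup [set r | exists x y, x <> y /\ r = `|f x - f y| / mdist x y].

Definition bounded_in_Lip0 (A : set (M -> R)) :=
  exists C : R, forall f, A f -> lip_norm f <= C.


Definition tri_ineq (g : Mtilde -> R) :=
  forall (x u y : M) (hxu : x <> u) (huy : u <> y) (hxy : x <> y),
    mdist x y * g (mt hxy) <= mdist x u * g (mt hxu) + mdist u y * g (mt huy).

(* (K, e) is a Stone-Cech compactification of the discrete space Mtilde:
   K compact Hausdorff, e has dense range and every bounded real function on
   Mtilde extends continuously to K (C*-embedding). *)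
Definition is_stone_cech (K : topologicalType) (e : Mtilde -> K) :=
  [/\ compact [set: K], hausdorff_space K, dense (range e) &
      forall h : Mtilde -> R, bounded_fun h ->
        exists H : K -> R, continuous H /\ forall p, H (e p) = h p].

Definition Gset (K : topologicalType) (e : Mtilde -> K) : set (K -> R) :=
  [set H | continuous H /\
    forall (x u y : M) (hxu : x <> u) (huy : u <> y) (hxy : x <> y),
      mdist x y * H (e (mt hxy)) <=
        mdist x u * H (e (mt hxu)) + mdist u y * H (e (mt huy))].

End Defs.

From Pilot Require Import Defs.
From HB Require Import structures.
From mathcomp Require Import all_boot all_order all_algebra.
From mathcomp Require Import all_classical all_reals all_analysis.
From mathcomp Require Import lra.
Import Order.TTheory GRing.Theory Num.Theory numFieldTopology.Exports.
Local Open Scope classical_set_scope.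
Local Open Scope ring_scope.
Set Implicit Arguments. Unset Strict Implicit.

(* Write D(x,y) = d(x,y) g(x,y), with D(x,x) = 0.  The inequality on g says
   that D satisfies the triangle inequality; with a third point u it also
   gives D(x,y) + D(y,x) >= 0, which covers the degenerate triangles.  Hence
   every f_b(z) = D(z,b) - D(x0,b) is Lipschitz (bounded g), vanishes at x0
   and has slopes (f_b x - f_b y)/d(x,y) <= g(x,y), with equality for b = y:
   the family of all f_b represents g with attained suprema.  Conversely, a
   supremum of slopes of a bounded family of Lipschitz functions is bounded,
   and inherits the inequality from f x - f y = (f x - f u) + (f u - f y). *)

Lemma bounded_funP (T : Type) (R : realType) (h : T -> R) :
  bounded_fun h <-> exists C, forall t, `|h t| <= C.
Proof.
split=> [[K [_ hK]] | [C hC]].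
  exists (`|K| + 1) => t; apply: hK => //.
  by rewrite (le_lt_trans (ler_norm _)) ?ltrDl.
rewrite /bounded_near; near=> K => t _; apply: le_trans (hC t) _.
by near: K; apply: nbhs_pinfty_ge; exact: num_real.
Unshelve. all: by end_near. Qed.

Lemma sup_max (R : realType) (E : set R) (m : R) :
  E m -> ubound E m -> sup E = m.
Proof.
move=> Em ubm; apply/eqP; rewrite eq_le ge_sup //; last by exists m.
by rewrite sup_upper_bound //; split; exists m.
Qed.

Section LipschitzNorm.
Context {R : realType} {M : metricType R}.

Lemma mdist_neq_gt0 (x y : M) : x <> y -> 0 < mdist x y.
Proof. by move=> xy; rewrite mdist_gt0; apply/eqP. Qed.

Lemma lip_norm_le (f : M -> R) (C : R) (a b : M) : a <> b ->
  (forall x y, `|f x - f y| <= C * mdist x y) -> lip_norm f <= C.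
Proof.
move=> ab fC; apply: ge_sup; first by exists (`|f a - f b| / mdist a b), a, b.
move=> _ [x [y [xy ->]]].
by rewrite ler_pdivrMr ?mdist_neq_gt0.
Qed.

(* The bare name [lipschitz] denotes a notation of normedtype. *)
Lemma lipschitz_le_lip_norm (f : M -> R) (x y : M) :
  Defs.lipschitz f -> `|f x - f y| <= lip_norm f * mdist x y.
Proof.
move=> [L fL]; have [<-|xy] := pselect (x = y).
  by rewrite subrr normr0 mdistxx mulr0.
rewrite -ler_pdivrMr ?mdist_neq_gt0 //; apply: sup_upper_bound.
  split; first by exists (`|f x - f y| / mdist x y), x, y.
  by exists L => _ [a [b [ab ->]]]; rewrite ler_pdivrMr ?mdist_neq_gt0.
by exists x, y.
Qed.

End LipschitzNorm.

Section SupremumOfSlopes.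
Context {R : realType} {M : metricType R}.
Variables (x0 : M) (A : set (M -> R)) (C : R).
Hypotheses (A_Lip0 : A `<=` Lip0 x0) (A_neq0 : A !=set0)
  (A_le : forall f, A f -> lip_norm f <= C).

Definition slopes (x y : M) : set R := [set (f x - f y) / mdist x y | f in A].

Definition sup_slope (x y : M) : R := sup (slopes x y).

Lemma slope_norm_le f x y : A f -> x <> y -> `|(f x - f y) / mdist x y| <= C.
Proof.
move=> Af xy; have d0 := mdist_neq_gt0 xy.
rewrite normrM normfV (gtr0_norm d0) ler_pdivrMr //.
apply: le_trans (lipschitz_le_lip_norm x y (A_Lip0 Af).2) _.
by rewrite ler_wpM2r ?mdist_ge0 ?A_le.
Qed.

Lemma has_sup_slopes x y : x <> y -> has_sup (slopes x y).
Proof.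
move=> xy; have [f0 Af0] := A_neq0.
split; first by exists ((f0 x - f0 y) / mdist x y), f0.
exists C => _ [f Af <-]; exact: le_trans (ler_norm _) (slope_norm_le Af xy).
Qed.

Lemma sup_slope_norm_le x y : x <> y -> `|sup_slope x y| <= C.
Proof.
move=> xy; have [f0 Af0] := A_neq0.
have f0_le := slope_norm_le Af0 xy; rewrite ler_norml in f0_le.
case/andP: f0_le => f0_ge _; rewrite ler_norml; apply/andP; split.
  apply: le_trans f0_ge _; apply: sup_upper_bound; first exact: has_sup_slopes.
  by exists f0.
apply: ge_sup; first by exists ((f0 x - f0 y) / mdist x y), f0.
move=> _ [f Af <-]; exact: le_trans (ler_norm _) (slope_norm_le Af xy).
Qed.

Lemma le_sup_slope f x y : A f -> x <> y -> f x - f y <= mdist x y * sup_slope x y.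
Proof.
move=> Af xy; rewrite mulrC -ler_pdivrMr ?mdist_neq_gt0 //.
by apply: sup_upper_bound; [exact: has_sup_slopes | exists f].
Qed.

Lemma sup_slope_triangle x u y : x <> u -> u <> y -> x <> y ->
  mdist x y * sup_slope x y <=
    mdist x u * sup_slope x u + mdist u y * sup_slope u y.
Proof.
move=> xu uy xy; rewrite mulrC -ler_pdivlMr ?mdist_neq_gt0 //.
have [f0 Af0] := A_neq0.
apply: ge_sup; first by exists ((f0 x - f0 y) / mdist x y), f0.
move=> _ [f Af <-]; rewrite ler_pM2r ?invr_gt0 ?mdist_neq_gt0 //.
have := le_sup_slope Af xu; have := le_sup_slope Af uy; lra.
Qed.

End SupremumOfSlopes.

Section Representation.
Context {R : realType} {M : metricType R}.
Variables (x0 : M) (g : @Mtilde R M -> R) (C : R).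
Hypotheses (three_pts : exists a b c : M, [/\ a <> b, b <> c & a <> c])
  (g_le : forall q, `|g q| <= C) (g_tri : tri_ineq g).

Definition gdist (x y : M) : R :=
  if pselect (x = y) is right xy then mdist x y * g (mt xy) else 0.

Lemma gdistE x y (xy : x <> y) : gdist x y = mdist x y * g (mt xy).
Proof.
by rewrite /gdist; case: pselect => // xy'; rewrite (Prop_irrelevance xy' xy).
Qed.

Lemma gdistxx x : gdist x x = 0.
Proof. by rewrite /gdist; case: pselect. Qed.

Lemma gdist_norm_le x y : `|gdist x y| <= C * mdist x y.
Proof.
have [<-|xy] := pselect (x = y); first by rewrite gdistxx mdistxx mulr0 normr0.
rewrite gdistE normrM ger0_norm ?mdist_ge0 // mulrC.
by rewrite ler_wpM2r ?mdist_ge0.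
Qed.

Lemma gdist_triangle_distinct x u y : x <> u -> u <> y -> x <> y ->
  gdist x y <= gdist x u + gdist u y.
Proof. by move=> xu uy xy; rewrite !gdistE; exact: g_tri. Qed.

Lemma exists_third_point (a b : M) : exists u, u <> a /\ u <> b.
Proof.
have [p [q [r [pq qr pr]]]] := three_pts.
have [pa|pa] := pselect (p = a); have [pb|pb] := pselect (p = b).
- by exists q; split=> qp; apply: pq; subst.
- have [qb|qb] := pselect (q = b).
    by exists r; split=> rp; subst; [apply: pr | apply: qr].
  by exists q; split=> // qa; apply: pq; subst.
- have [qa|qa] := pselect (q = a).
    by exists r; split=> rp; subst; [apply: qr | apply: pr].
  by exists q; split=> // qb; apply: pq; subst.
- by exists p.
Qed.

Lemma gdist_sym_ge0 x y : 0 <= gdist x y + gdist y x.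
Proof.
have [<-|xy] := pselect (x = y); first by rewrite gdistxx addr0.
have [u [ux uy]] := exists_third_point x y.
have := gdist_triangle_distinct xy (nesym uy) (nesym ux).
have := gdist_triangle_distinct (nesym xy) (nesym ux) (nesym uy).
lra.
Qed.

Lemma gdist_triangle x u y : gdist x y <= gdist x u + gdist u y.
Proof.
have [<-|xy] := pselect (x = y); first by rewrite gdistxx gdist_sym_ge0.
have [<-|xu] := pselect (x = u); first by rewrite gdistxx add0r.
have [->|uy] := pselect (u = y); first by rewrite gdistxx addr0.
exact: gdist_triangle_distinct.
Qed.

Definition gdist_to (b : M) : M -> R := fun z => gdist z b - gdist x0 b.

Lemma gdist_to_sub b z w : gdist_to b z - gdist_to b w = gdist z b - gdist w b.
Proof. rewrite /gdist_to; lra. Qed.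

Lemma gdist_to_sub_le b z w : gdist_to b z - gdist_to b w <= gdist z w.
Proof. by rewrite gdist_to_sub; have := gdist_triangle z w b; lra. Qed.

Lemma gdist_to_lipschitz b z w : `|gdist_to b z - gdist_to b w| <= C * mdist z w.
Proof.
have := gdist_to_sub_le b z w; have := gdist_to_sub_le b w z.
move: (gdist_norm_le z w) (gdist_norm_le w z).
rewrite !ler_norml [mdist w z]metric_sym => /andP[? ?] /andP[? ?]; lra.
Qed.

Lemma gdist_to_Lip0 b : Lip0 x0 (gdist_to b).
Proof.
split; first by rewrite /gdist_to subrr.
by exists C; exact: gdist_to_lipschitz.
Qed.

Lemma gdist_to_slope x y (xy : x <> y) :
  (gdist_to y x - gdist_to y y) / mdist x y = g (mt xy).
Proof.
rewrite gdist_to_sub gdistxx subr0 (gdistE xy) [mdist x y * _]mulrC mulfK //.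
by rewrite gt_eqF ?mdist_neq_gt0.
Qed.

Lemma gdist_to_slope_le b x y (xy : x <> y) :
  (gdist_to b x - gdist_to b y) / mdist x y <= g (mt xy).
Proof.
rewrite ler_pdivrMr ?mdist_neq_gt0 // mulrC -gdistE.
exact: gdist_to_sub_le.
Qed.

Lemma gdist_to_represents :
  exists A : set (M -> R),
    [/\ A `<=` Lip0 x0, A !=set0, bounded_in_Lip0 A &
        forall (x y : M) (hxy : x <> y),
          g (mt hxy) = sup [set (f x - f y) / mdist x y | f in A] /\
          exists2 f, A f & g (mt hxy) = (f x - f y) / mdist x y].
Proof.
have [a [b [_ [ab _ _]]]] := three_pts.
exists (range gdist_to); split.
- by move=> _ [b' _ <-]; exact: gdist_to_Lip0.
- by exists (gdist_to x0), x0.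
- exists C => _ [b' _ <-]; apply: (lip_norm_le ab); exact: gdist_to_lipschitz.
move=> x y xy; have slope_y := gdist_to_slope xy.
split; last by exists (gdist_to y); [exists y | rewrite slope_y].
apply/esym/sup_max; first by exists (gdist_to y); [exists y |].
by move=> _ [_ [b' _ <-] <-]; exact: gdist_to_slope_le.
Qed.

End Representation.

Theorem proposition2p7 (R : realType) (M : metricType R) (x0 : M)
  (Mcomplete : @complete_metric R M)
  (three_pts : exists a b c : M, [/\ a <> b, b <> c & a <> c])
  (g : @Mtilde R M -> R) :
  ((bounded_fun g /\ tri_ineq g) <->
    exists A : set (M -> R),
      [/\ A `<=` Lip0 x0, A !=set0, bounded_in_Lip0 A &
          forall (x y : M) (hxy : x <> y),
            g (mt hxy) = sup [set (f x - f y) / mdist x y | f in A]])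
  /\
  ((bounded_fun g /\ tri_ineq g) ->
    (forall (K : topologicalType) (e : @Mtilde R M -> K),
       is_stone_cech e ->
       forall H : K -> R, continuous H -> (forall p, H (e p) = g p) ->
         Gset e H)
    /\
    exists A : set (M -> R),
      [/\ A `<=` Lip0 x0, A !=set0, bounded_in_Lip0 A &
          forall (x y : M) (hxy : x <> y),
            g (mt hxy) = sup [set (f x - f y) / mdist x y | f in A] /\
            exists2 f, A f & g (mt hxy) = (f x - f y) / mdist x y]).
Proof.
split; first split.
- move=> [/bounded_funP[C g_le] g_tri].
  have [A [A_Lip0 A_neq0 A_le g_sup]] :=
    gdist_to_represents x0 three_pts g_le g_tri.
  by exists A; split=> // x y xy; have [] := g_sup x y xy.
- move=> [A [A_Lip0 A_neq0 [C A_le] g_sup]]; split.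
    apply/bounded_funP; exists C => -[[x y] xy].
    by rewrite (g_sup x y xy); exact: (sup_slope_norm_le A_Lip0 A_neq0 A_le).
  move=> x u y xu uy xy; rewrite !g_sup.
  exact: (sup_slope_triangle A_Lip0 A_neq0 A_le).
move=> [/bounded_funP[C g_le] g_tri]; split.
  move=> K e _ H H_cont He; split=> // x u y xu uy xy; rewrite !He; exact: g_tri.
exact: gdist_to_represents.
Qed.
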